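(* Let $\mathcal{P}$ be a Prob-solvable loop with program variables $x_1,\ldots,x_m$, and let $M=\prod_{i=1}^m x_i^{\alpha_i}$ be any monomial (with $\alpha_i\in\mathbb{N}$) in the program variables. Then the sequence of expected values $E[M(n)]$, $n\ge 0$, is modeled by C-finite recurrences over E-variables: there is a finite set $\mathcal{S}$ of monomials in $x_1,\ldots,x_m$ containing $M$ such that, for every $N\in\mathcal{S}$, $E[N(n+1)]$ equals a linear combination, with constant coefficients, of the E-variables $E[N'(n)]$, $N'\in\mathcal{S}$, plus a constant. In particular higher-order (and mixed) moments of the program variables satisfy a system of linear recurrences with constant coefficients.
   Context: A Prob-solvable loop consists of an initialization assigning initial values (constants) to program variables $x_1,\ldots,x_m$, followed by a loop \texttt{while true do} whose body updates the variables in order $x_1,\ldots,x_m$ by probabilistic assignments of the form $x_i := a_i x_i + P_i(x_1,\ldots,x_{i-1})$ with probability $p_i$, and $x_i := b_i x_i + Q_i(x_1,\ldots,x_{i-1})$ with probability $1-p_i$, where $a_i,b_i$ are constants, $p_i\in[0,1]$, and $P_i,Q_i$ are polynomials in the already-updated variables $x_1,\ldots,x_{i-1}$ (i.e. their values in the current iteration) whose coefficients are constants or random variables drawn independently (e.g. uniformly from a fixed interval, such as \texttt{rand}$(a,b)$) with known constant moments, independent of the program state. The probabilistic choices in each iteration are independent. For $n\ge 0$, $x_i(n)$ denotes the random variable giving the value of $x_i$ after $n$ loop iterations, and for a monomial $M=\prod x_i^{\alpha_i}$, $M(n)=\prod x_i(n)^{\alpha_i}$. An E-variable is an expression $E[M(n)]$,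 the expected value of a monomial in the program variables at iteration $n$. A C-finite recurrence is a linear recurrence with constant coefficients. *)

From HB Require Import structures.
From mathcomp Require Import all_boot all_order all_algebra.
From mathcomp Require Import all_classical all_reals all_analysis.
Set Implicit Arguments. Unset Strict Implicit. Unset Printing Implicit Defensive.
Import Order.TTheory GRing.Theory Num.Theory.
Local Open Scope classical_set_scope.
Local Open Scope ring_scope.

Definition monomial (m : nat) := {ffun 'I_m -> nat}.

Definition mono_eval {R : pzRingType} (m : nat) (alpha : monomial m) (s : 'I_m -> R) : R :=
  \prod_(j < m) s j ^+ alpha j.

(* Syntax of a Prob-solvable loop with variables x_0 .. x_{m-1} (updated in this order):
     x_i := a_i x_i + P_i(x_0..x_{i-1})  with probability p_i
     x_i := b_i x_i + Q_i(x_0..x_{i-1})  with probability 1 - p_i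
   P_i (branch [true]) and Q_i (branch [false]) are given by a list of monomials
   [terms i br]; the coefficient of the t-th monomial is a random variable
   (see [loop_model]).  Constants are the degenerate case. *)
Record prob_solvable (R : realType) (m : nat) := ProbSolvable {
  ps_init : 'I_m -> R;
  ps_a : 'I_m -> R;
  ps_b : 'I_m -> R;
  ps_p : 'I_m -> R;
  ps_terms : 'I_m -> bool -> seq (monomial m);
  ps_p_ge0 : forall i, 0 <= ps_p i;
  ps_p_le1 : forall i, ps_p i <= 1;
  (* P_i, Q_i only involve the already-updated variables x_j, j < i *)
  ps_triangular : forall i br (alpha : monomial m), alpha \in ps_terms i br ->
      forall j : 'I_m, (i <= j)%N -> alpha j = 0%N
}.

(* Index of the random quantities drawn in the loop:
   (k, i, None)          : the branch selector of variable i in iteration k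
                           (value 1 = first branch, value 0 = second branch);
   (k, i, Some (br, t))  : the coefficient of the t-th monomial of P_i (br = true)
                           or Q_i (br = false) in iteration k. *)
Definition rindex (m : nat) := (nat * 'I_m * option (bool * nat))%type.

Definition mutually_independent {d} {T : measurableType d} {R : realType}
    (P : probability T R) (I : eqType) (X : I -> T -> R) : Prop :=
  forall (J : seq I) (B : I -> set R), uniq J ->
    (forall j, j \in J -> measurable (B j)) ->
    P (\bigcap_(j in [set j | j \in J]) (X j @^-1` B j)) =
    (\prod_(j <- J) P (X j @^-1` B j))%E.

Section Semantics.
Context {d} {T : measurableType d} {R : realType} {m : nat}.
Variables (L : prob_solvable R m) (Z : rindex m -> T -> R).

Definition branch_poly (k : nat) (w : T) (i : 'I_m) (br : bool) (s : 'I_m -> R) : R :=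
  \sum_(t < size (ps_terms L i br))
     Z (k, i, Some (br, val t)) w * mono_eval (nth [ffun => 0%N] (ps_terms L i br) t) s.

(* new value assigned to x_i in iteration k, given the current state s
   (in which x_0..x_{i-1} already hold their updated values) *)
Definition assign (k : nat) (w : T) (s : 'I_m -> R) (i : 'I_m) : R :=
  if Z (k, i, None) w == 1 then ps_a L i * s i + branch_poly k w i true s
  else ps_b L i * s i + branch_poly k w i false s.

Definition upd (s : 'I_m -> R) (i : 'I_m) (v : R) : 'I_m -> R :=
  fun j => if j == i then v else s j.

Definition body (k : nat) (w : T) (s : 'I_m -> R) : 'I_m -> R :=
  foldl (fun s i => upd s i (assign k w s i)) s (enum 'I_m).

Fixpoint state (n : nat) (w : T) : 'I_m -> R :=
  match n with
  | 0 => ps_init L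
  | n'.+1 => body n' w (state n' w)
  end.

Definition mono_rv (M : monomial m) (n : nat) : T -> R :=
  fun w => mono_eval M (state n w).

End Semantics.

Definition loop_model {d} {T : measurableType d} {R : realType} {m : nat}
    (L : prob_solvable R m) (P : probability T R) (Z : rindex m -> {RV P >-> R}) : Prop :=
  [/\ mutually_independent P (fun j => (Z j : T -> R)),
      (forall k i, P ((Z (k, i, None) : T -> R) @^-1` [set 1]) = (ps_p L i)%:E),
      (forall k i, P ((Z (k, i, None) : T -> R) @^-1` [set 0]) = (1 - ps_p L i)%:E),
      (forall k i br (t : nat) (r : nat), (t < size (ps_terms L i br))%N ->
         P.-integrable setT (fun w => ((Z (k, i, Some (br, t)) w) ^+ r)%:E))
    & (forall k k' i br (t : nat) (r : nat), (t < size (ps_terms L i br))%N ->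
         ('E_P[fun w => ((Z (k, i, Some (br, t)) w) ^+ r)%R])%E =
         ('E_P[fun w => ((Z (k', i, Some (br, t)) w) ^+ r)%R])%E)].
Arguments loop_model {d T R m} L P Z.

(* Weigh a monomial prod_j x_j^(k_j) by sum_j k_j K^j, where K exceeds the degree of every
   monomial of the P_i and Q_i.  Since P_i only involves x_1, ..., x_{i-1}, substituting the
   assignments of one iteration into a monomial N yields a polynomial in the random quantities
   of that iteration and the previous state whose state monomials all have weight at most that
   of N.  The state after n iterations is a polynomial in the random quantities of iterations
   before n, which are independent of those of iteration n, so the expectation of each term
   factors as a moment of the iteration-n quantities (the same for every n) times E[N'(n)].
   Hence the finitely many monomials of weight at most that of M satisfy a C-finite system
   (with zero constant terms; constants are the empty monomial). *)

From HB Require Import structures.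
From mathcomp Require Import all_boot all_order all_algebra.
From mathcomp Require Import all_classical all_reals all_analysis.
From mathcomp Require Import measurable_realfun.
Set Implicit Arguments. Unset Strict Implicit. Unset Printing Implicit Defensive.
Import Order.TTheory GRing.Theory Num.Theory HBNNSimple.
Local Open Scope classical_set_scope.
Local Open Scope ring_scope.

Section integral_compM.
Context d (T : measurableType d) (R : realType) (P : probability T R).
Local Open Scope ereal_scope.
Variables (X Y : T -> R).
Hypotheses (mX : measurable_fun setT X) (mY : measurable_fun setT Y).
Hypotheses (Y_ge0 : forall w, (0 <= Y w)%R) (Y_fin : \int[P]_w (Y w)%:E \is a fin_num).
Hypothesis indicM : forall B, measurable B ->
  \int[P]_w ((\1_(X @^-1` B) w)%:E * (Y w)%:E) = P (X @^-1` B) * \int[P]_w (Y w)%:E.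

Let nnsfun_enum_ge0 (h : {nnsfun R >-> R}) i :
  (0 <= (finmap.enum_fset (fset_set (range h)))`_i)%R.
Proof.
set s := finmap.enum_fset _; have [ilt|ige] := ltnP i (size s); last by rewrite nth_default.
have := mem_nth 0%R ilt; rewrite /s (in_fset_set (fimfunP h)) inE.
by move=> -[x _ <-]; exact: fun_ge0.
Qed.

Let integral_nnsfun_compM (h : {nnsfun R >-> R}) (V : T -> \bar R) :
  measurable_fun setT V -> (forall w, 0 <= V w) ->
  let s := finmap.enum_fset (fset_set (range h)) in
  \int[P]_w ((h (X w))%:E * V w) =
  \sum_(i < size s) (s`_i)%:E * \int[P]_w ((\1_(X @^-1` (h @^-1` [set s`_i])) w)%:E * V w).
Proof.
move=> mV V0 s; have s_ge0 := nnsfun_enum_ge0 h.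
have mI i : measurable (X @^-1` (h @^-1` [set s`_i])).
  by rewrite -[X in measurable X]setTI; apply: mX => //; exact: measurable_funPTI.
under eq_integral => w _.
  rewrite (fimfunEord h (X w)) -sumEFin ge0_sume_distrl; last first.
    by move=> i _; rewrite lee_fin mulr_ge0.
  over.
rewrite ge0_integral_sum //; last first.
- by move=> i w _; rewrite mule_ge0 // lee_fin mulr_ge0.
- move=> i; apply: emeasurable_funM => //; apply/measurable_EFinP.
  exact: measurable_funM (measurable_indic (mI i)).
apply: eq_bigr => i _; under eq_integral do rewrite EFinM -muleA.
rewrite ge0_integralZl //.
- by apply: emeasurable_funM => //; apply/measurable_EFinP; exact: measurable_indic (mI i).
- by move=> w _; rewrite mule_ge0.
- by rewrite lee_fin.
Qed.

Let integral_nnsfun_compM_indep (h : {nnsfun R >-> R}) :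
  \int[P]_w ((h (X w))%:E * (Y w)%:E) = \int[P]_w (h (X w))%:E * \int[P]_w (Y w)%:E.
Proof.
have mY' : measurable_fun setT (EFin \o Y) by exact/measurable_EFinP.
have m1 : measurable_fun setT (fun _ : T => 1 : \bar R) by exact: measurable_cst.
rewrite integral_nnsfun_compM // (eq_integral (fun w => (h (X w))%:E * 1)); last first.
  by move=> w _; rewrite mule1.
rewrite integral_nnsfun_compM // ge0_sume_distrl; last first.
  move=> i _; apply: mule_ge0; last by apply: integral_ge0 => w _; rewrite mule1.
  by rewrite lee_fin nnsfun_enum_ge0.
apply: eq_bigr => i _; rewrite -muleA; congr (_ * _).
have mh : measurable (h @^-1` [set (finmap.enum_fset (fset_set (range h)))`_i]).
  exact: measurable_funPTI.
rewrite indicM //; congr (_ * _); under eq_integral do rewrite mule1.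
by rewrite integral_indic ?setIT // -[X in measurable X]setTI; exact: mX.
Qed.

Lemma integral_compM_indep (f : R -> R) : measurable_fun setT f -> (forall x, (0 <= f x)%R) ->
  \int[P]_w ((f (X w))%:E * (Y w)%:E) = \int[P]_w (f (X w))%:E * \int[P]_w (Y w)%:E.
Proof.
move=> mf f0.
have mEf : measurable_fun setT (EFin \o f) by exact/measurable_EFinP.
pose h := nnsfun_approx measurableT mEf.
have h_cvg x : (fun n => (h n x)%:E) @ \oo --> (f x)%:E.
  by apply: (@cvg_nnsfun_approx _ _ _ _ measurableT _ mEf) => // y _; rewrite lee_fin.
have h_nd x : {homo (fun n => h n x) : n m / (n <= m)%N >-> (n <= m)%R}.
  by move=> a b ab; exact/lefP/nd_nnsfun_approx.
have mhX n : measurable_fun setT (fun w => (h n (X w))%:E).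
  by apply/measurable_EFinP; apply: measurableT_comp => //; exact: measurable_funP.
have Y_int_ge0 : 0 <= \int[P]_w (Y w)%:E by apply: integral_ge0 => w _; rewrite lee_fin.
have -> : \int[P]_w ((f (X w))%:E * (Y w)%:E) =
    limn (fun n => \int[P]_w ((h n (X w))%:E * (Y w)%:E)).
  rewrite -monotone_convergence //.
  - apply: eq_integral => w _; apply/esym/cvg_lim => //.
    by apply: cvgeZr => //; exact: h_cvg.
  - by move=> n; apply: emeasurable_funM => //; exact/measurable_EFinP.
  - by move=> n w _; rewrite mule_ge0 // lee_fin.
  - by move=> w _ a b ab; rewrite lee_wpmul2r ?lee_fin //; exact: h_nd.
have -> : \int[P]_w (f (X w))%:E = limn (fun n => \int[P]_w (h n (X w))%:E).
  rewrite -monotone_convergence //.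
  - by apply: eq_integral => w _; apply/esym/cvg_lim => //; exact: h_cvg.
  - by move=> n w _; rewrite lee_fin.
  - by move=> w _ a b ab; rewrite lee_fin; exact: h_nd.
under eq_fun do rewrite integral_nnsfun_compM_indep.
apply: cvg_lim => //; apply: cvgeZr => //; apply: ereal_nondecreasing_is_cvgn.
move=> a b ab; apply: ge0_le_integral => //; try by move=> w _; rewrite lee_fin.
by move=> w _; rewrite lee_fin; exact: h_nd.
Qed.

End integral_compM.

Section independent_product.
Context d (T : measurableType d) (R : realType) (P : probability T R).
Variables (I : eqType) (Z : I -> T -> R).
Hypotheses (mZ : forall i, measurable_fun setT (Z i)) (indepZ : mutually_independent P Z).

Let set_cons (x : I) (s : seq I) : [set` x :: s] = x |` [set` s].
Proof.
apply/seteqP; split => y /=; rewrite inE; first by case/orP => [/eqP|]; [left|right].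
by case=> [->|->]; rewrite ?eqxx ?orbT.
Qed.

Let prod_indic_preimage (K : seq I) (B : I -> set R) w :
  \prod_(k <- K) \1_(B k) (Z k w) = \1_(\bigcap_(k in [set` K]) (Z k @^-1` B k)) w :> R.
Proof.
elim: K => [|k K IH]; first by rewrite big_nil set_nil bigcap_set0 indicT.
by rewrite big_cons set_cons bigcap_setU1 indicI IH.
Qed.

Local Open Scope ereal_scope.

(* The indicator factors make the induction hypothesis strong enough to supply the
   product rule against indicators that integral_compM_indep requires. *)
Lemma integral_prod_indic_ge0 (J K : seq I) (f : I -> R -> R) (B : I -> set R) :
  uniq (J ++ K) -> (forall j, measurable_fun setT (f j)) -> (forall j x, (0 <= f j x)%R) ->
  (forall j, j \in J -> \int[P]_w (f j (Z j w))%:E \is a fin_num) ->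
  (forall k, measurable (B k)) ->
  \int[P]_w ((\prod_(j <- J) f j (Z j w)) * \prod_(k <- K) \1_(B k) (Z k w))%:E =
  (\prod_(j <- J) \int[P]_w (f j (Z j w))%:E) * \prod_(k <- K) P (Z k @^-1` B k).
Proof.
move=> + mf f0 + mB; elim: J K B mB => [|j J IH] K B mB /= uJK f_fin.
  under eq_integral do rewrite big_nil mul1r prod_indic_preimage.
  have mZB k : measurable (Z k @^-1` B k) by rewrite -[X in measurable X]setTI; exact: mZ.
  rewrite big_nil mul1e integral_indic // ?setIT; first exact: indepZ.
  by apply: fin_bigcap_measurable => [|k _]; [exact: finite_seq|exact: mZB].
move: uJK => /andP[]; rewrite mem_cat negb_or => /andP[jJ jK] uJK.
have f_fin' k : k \in J -> \int[P]_w (f k (Z k w))%:E \is a fin_num.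
  by move=> kJ; rewrite f_fin // in_cons kJ orbT.
pose Y w := ((\prod_(k <- J) f k (Z k w)) * \prod_(k <- K) \1_(B k) (Z k w))%R.
have mY : measurable_fun setT Y.
  apply: measurable_funM; apply: measurable_prod => k _.
    exact: measurableT_comp (mf k) (mZ k).
  exact: measurableT_comp (measurable_indic (mB k)) (mZ k).
have Y_ge0 w : (0 <= Y w)%R by apply: mulr_ge0; apply: prodr_ge0 => k _.
have Y_fin : \int[P]_w (Y w)%:E \is a fin_num.
  rewrite IH // fin_numM // !big_seq; apply: prode_fin_num => k kJK; first exact: f_fin'.
  by rewrite fin_num_measure // -[X in measurable X]setTI; exact: mZ.
under eq_integral do rewrite big_cons -mulrA EFinM.
rewrite (integral_compM_indep (mZ j) mY Y_ge0 Y_fin _ (mf j) (f0 j)).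
  by rewrite IH // big_cons muleA.
move=> B0 mB0; pose B' := [eta B with j |-> B0].
have mB' k : measurable (B' k) by rewrite /=; case: ifP.
have B'j : B' j = B0 by rewrite /= eqxx.
have B'K k : k \in K -> B' k = B k.
  by move=> kK /=; case: eqP => // kj; move: jK; rewrite -kj kK.
have uJjK : uniq (J ++ j :: K).
  have /perm_uniq -> : perm_eq (J ++ j :: K) (j :: J ++ K).
    by apply/permPl; exact: (perm_catCA J [:: j] K).
  by rewrite /= mem_cat negb_or jJ jK.
transitivity (\int[P]_w ((\prod_(k <- J) f k (Z k w)) *
                          \prod_(k <- j :: K) \1_(B' k) (Z k w))%:E).
  apply: eq_integral => w _; rewrite -EFinM big_cons B'j /Y mulrCA.
  by congr (_ * (_ * _))%:E; apply: eq_big_seq => k /B'K ->.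
rewrite IH // big_cons B'j IH // muleCA; congr (_ * (_ * _)).
by apply: eq_big_seq => k /B'K ->.
Qed.

Lemma integral_prod_ge0 (J : seq I) (f : I -> R -> R) :
  uniq J -> (forall j, measurable_fun setT (f j)) -> (forall j x, (0 <= f j x)%R) ->
  (forall j, j \in J -> \int[P]_w (f j (Z j w))%:E \is a fin_num) ->
  \int[P]_w (\prod_(j <- J) f j (Z j w))%:E = \prod_(j <- J) \int[P]_w (f j (Z j w))%:E.
Proof.
move=> uJ mf f0 f_fin.
have := @integral_prod_indic_ge0 J [::] f (fun _ => setT).
rewrite cats0 big_nil mule1 => <- //.
by apply: eq_integral => w _; rewrite big_nil mulr1.
Qed.

Lemma integrable_prod (J : seq I) (g : I -> R -> R) :
  uniq J -> (forall j, measurable_fun setT (g j)) ->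
  (forall j, j \in J -> P.-integrable setT (fun w => (g j (Z j w))%:E)) ->
  P.-integrable setT (fun w => (\prod_(j <- J) g j (Z j w))%:E).
Proof.
move=> uJ mg g_int; apply/integrableP; split.
  by apply/measurable_EFinP; apply: measurable_prod => j _; exact: measurableT_comp.
have abs_fin j : j \in J -> \int[P]_w (`|g j (Z j w)|%R)%:E \is a fin_num.
  move=> jJ; have /integrableP[_] := g_int j jJ.
  rewrite ge0_fin_numE; last by apply: integral_ge0 => w _; rewrite lee_fin.
  by under eq_integral do rewrite abse_EFin.
have m_abs j : measurable_fun setT (fun x => `|g j x|)%R.
  by apply: measurableT_comp => //; exact: normr_measurable.
under eq_integral do rewrite abse_EFin normr_prod.
rewrite (@integral_prod_ge0 J (fun j x => `|g j x|)%R) // -ge0_fin_numE.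
  by rewrite big_seq; apply: prode_fin_num.
by rewrite big_seq; apply: prode_ge0 => j _; apply: integral_ge0 => w _; rewrite lee_fin.
Qed.

Let Rintegral_prod_ge0 (K : seq I) (g : I -> R -> R) :
  uniq K -> (forall k, measurable_fun setT (g k)) ->
  (forall k, k \in K -> P.-integrable setT (fun w => (g k (Z k w))%:E)) ->
  (forall k x, k \in K -> (0 <= g k x)%R) ->
  (\int[P]_w (\prod_(k <- K) g k (Z k w)) = \prod_(k <- K) \int[P]_w g k (Z k w))%R.
Proof.
move=> uK mg g_int g0.
have g_abs w : (\prod_(k <- K) g k (Z k w) = \prod_(k <- K) `|g k (Z k w)|)%R.
  by apply: eq_big_seq => k kK; rewrite ger0_norm ?g0.
have g_int_abs k : k \in K ->
    \int[P]_w (`|g k (Z k w)|%R)%:E = (\int[P]_w g k (Z k w))%:E.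
  move=> kK; under eq_integral do rewrite ger0_norm ?g0 //.
  by rewrite fineK //; exact: integrable_fin_num (g_int k kK).
rewrite /Rintegral; under eq_integral do rewrite g_abs.
rewrite (@integral_prod_ge0 K (fun k x => `|g k x|)%R) //.
- by rewrite [in LHS]big_seq (eq_bigr _ g_int_abs) prodEFin /= -big_seq.
- by move=> k; apply: measurableT_comp => //; exact: normr_measurable.
- by move=> k kK; rewrite g_int_abs.
Qed.

(* Induction on the factors of arbitrary sign: each is split into its positive and
   negative parts, which join the nonnegative factors indexed by K. *)
Let Rintegral_prod_cat (J K : seq I) (g : I -> R -> R) :
  uniq (J ++ K) -> (forall j, measurable_fun setT (g j)) ->
  (forall j, j \in J ++ K -> P.-integrable setT (fun w => (g j (Z j w))%:E)) ->
  (forall k x, k \in K -> (0 <= g k x)%R) ->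
  (\int[P]_w (\prod_(j <- J ++ K) g j (Z j w)) =
   \prod_(j <- J ++ K) \int[P]_w g j (Z j w))%R.
Proof.
elim: J K g => [|j J IH] K g uJK mg g_int g0; first exact: Rintegral_prod_ge0.
move: (uJK) => /= /andP[jJK uJK'].
have pJK : perm_eq (J ++ j :: K) (j :: J ++ K) by apply/permPl; exact: perm_catCA J [:: j] K.
pose gj (q : R -> R) := [eta g with j |-> q].
have prod_gj q (F : I -> (R -> R) -> R) :
    (\prod_(k <- J ++ j :: K) F k (gj q k) = F j q * \prod_(k <- J ++ K) F k (g k))%R.
  rewrite (perm_big _ pJK) big_cons /= eqxx; congr (_ * _)%R.
  by apply: eq_big_seq => k kJK; case: eqP => // kj; move: jJK; rewrite -kj kJK.
have gjP q : measurable_fun setT q -> P.-integrable setT (fun w => (q (Z j w))%:E) ->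
    (forall x, 0 <= q x)%R ->
  P.-integrable setT (fun w => (q (Z j w) * \prod_(k <- J ++ K) g k (Z k w))%:E) /\
  (\int[P]_w (q (Z j w) * \prod_(k <- J ++ K) g k (Z k w)) =
   \int[P]_w q (Z j w) * \prod_(k <- J ++ K) \int[P]_w g k (Z k w))%R.
  move=> mq q_int q0.
  have mgj k : measurable_fun setT (gj q k) by rewrite /=; case: ifP.
  have gj_int k : k \in J ++ j :: K -> P.-integrable setT (fun w => (gj q k (Z k w))%:E).
    rewrite (perm_mem pJK) /= in_cons; case: eqP => [-> //|_ /= kJK].
    by apply: g_int; rewrite /= in_cons kJK orbT.
  have gj0 k x : k \in j :: K -> (0 <= gj q k x)%R.
    by rewrite /= in_cons; case: eqP => // _ /= kK; apply: g0.
  split.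
    apply: eq_integrable (integrable_prod _ mgj gj_int) => //; last by rewrite (perm_uniq pJK).
    by move=> w _; rewrite (prod_gj q (fun k h => h (Z k w))).
  have := IH (j :: K) (gj q) _ mgj gj_int gj0; rewrite (perm_uniq pJK) => /(_ uJK).
  rewrite (prod_gj q (fun k h => \int[P]_w h (Z k w))%R) => <-.
  by apply: eq_Rintegral => w _; rewrite (prod_gj q (fun k h => h (Z k w))).
have mgj := measurable_funrpos (mg j); have mgn := measurable_funrneg (mg j).
have gjp_int := integrable_funrpos measurableT (g_int j (mem_head _ _)).
have gjn_int := integrable_funrneg measurableT (g_int j (mem_head _ _)).
have [gjpP gjpE] := gjP _ mgj gjp_int (funrpos_ge0 _).
have [gjnP gjnE] := gjP _ mgn gjn_int (funrneg_ge0 _).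
have g_split x : g j x = ((g j)^\+ x - (g j)^\- x)%R.
  by rewrite -[in LHS](funrposBneg (g j)).
rewrite /= big_cons; under eq_Rintegral do rewrite big_cons g_split mulrBl.
rewrite RintegralB // gjpE gjnE -mulrBl -RintegralB //.
by under eq_Rintegral do rewrite -g_split.
Qed.

Lemma Rintegral_prod (J : seq I) (g : I -> R -> R) :
  uniq J -> (forall j, measurable_fun setT (g j)) ->
  (forall j, j \in J -> P.-integrable setT (fun w => (g j (Z j w))%:E)) ->
  (\int[P]_w (\prod_(j <- J) g j (Z j w)) = \prod_(j <- J) \int[P]_w g j (Z j w))%R.
Proof.
by move=> uJ mg g_int; have := @Rintegral_prod_cat J [::] g; rewrite cats0; apply.
Qed.

End independent_product.

Section linear_combination.
Context d (T : measurableType d) (R : realType) (mu : {measure set T -> \bar R}).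

Lemma Rintegral_lincomb (Y : Type) (phi : Y -> T -> R) (p : seq (R * Y)) :
  (forall y, mu.-integrable setT (EFin \o phi y)) ->
  mu.-integrable setT (fun w => (\sum_(y <- p) y.1 * phi y.2 w)%:E) /\
  \int[mu]_w (\sum_(y <- p) y.1 * phi y.2 w) = \sum_(y <- p) y.1 * \int[mu]_w phi y.2 w.
Proof.
move=> phi_int; elim: p => [|y p [IHint IHE]].
  split.
    by apply: (eq_integrable measurableT (cst 0%E)) (integrable0 _ _) => w _; rewrite big_nil.
  by under eq_Rintegral do rewrite big_nil; rewrite Rintegral_cst // mul0r big_nil.
have yint : mu.-integrable setT (EFin \o (fun w => y.1 * phi y.2 w)).
  by have := integrableZl measurableT y.1 (phi_int y.2); apply: eq_integrable.
split.
  have := integrableD measurableT yint IHint; apply: eq_integrable => // w _.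
  by rewrite big_cons.
under eq_Rintegral do rewrite big_cons.
by rewrite RintegralD // RintegralZl // IHE big_cons.
Qed.

End linear_combination.

Lemma expectation_Rintegral d (T : measurableType d) (R : realType) (P : probability T R)
    (f : T -> R) :
  P.-integrable setT (EFin \o f) -> ('E_P[f] = (\int[P]_w f w)%:E)%E.
Proof. by move=> fint; rewrite unlock /Rintegral fineK //; exact: integrable_fin_num. Qed.

Lemma partition_sumr_seq (R : pzSemiRingType) (I : Type) (J : eqType) (r : seq I) (s : seq J)
    (key : I -> J) (a : I -> R) (b : J -> R) :
  uniq s -> all (fun i => key i \in s) r ->
  \sum_(j <- s) (\sum_(i <- r | key i == j) a i) * b j = \sum_(i <- r) a i * b (key i).
Proof.
move=> us keys; under eq_bigr do rewrite mulr_suml big_mkcond.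
rewrite exchange_big; elim: r keys => [_|i r IH /andP[iS keys]]; first by rewrite !big_nil.
rewrite !big_cons IH //; congr (_ + _); rewrite -big_mkcond /=.
rewrite (eq_bigr (fun _ => a i * b (key i))) => [|j /eqP <- //].
rewrite big_const_seq (eq_count (a2 := pred1 (key i))) => [|j]; last by rewrite /= eq_sym.
by rewrite count_uniq_mem // iS /= addr0.
Qed.

(* Polynomials in finitely many functions [a i], [i \in A], graded by giving [a i] the
   weight [omega i]. *)
Section atom_polynomial.
Variables (R : comPzRingType) (X : Type) (I : eqType).
Variables (a : I -> X -> R) (A : seq I) (omega : I -> nat).

Definition atom_monomial (e : I -> nat) (x : X) : R := \prod_(i <- A) a i x ^+ e i.

Definition atom_weight (e : I -> nat) : nat := (\sum_(i <- A) e i * omega i)%N.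

Definition atom_poly (b : nat) (F : X -> R) : Prop :=
  exists p : seq (R * (I -> nat)), all (fun y => atom_weight y.2 <= b)%N p /\
    F =1 (fun x => \sum_(y <- p) y.1 * atom_monomial y.2 x).

Lemma eq_atom_poly b F G : F =1 G -> atom_poly b F -> atom_poly b G.
Proof. by move=> FG [p [pb pF]]; exists p; split => // x; rewrite -FG. Qed.

Lemma atom_poly_le b b' F : (b <= b')%N -> atom_poly b F -> atom_poly b' F.
Proof.
move=> bb' [p [pb pF]]; exists p; split => //.
by apply/allP => y /(allP pb) /leq_trans; apply.
Qed.

Lemma atom_poly_monomial e : atom_poly (atom_weight e) (atom_monomial e).
Proof. by exists [:: (1, e)]; split => [|x]; rewrite /= ?leqnn // big_seq1 mul1r. Qed.

Lemma atom_poly_cst c : atom_poly 0 (fun=> c).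
Proof.
exists [:: (c, fun=> 0%N)]; split => [|x]; first by rewrite /= /atom_weight big1.
by rewrite big_seq1 /atom_monomial big1 ?mulr1.
Qed.

Lemma atom_poly_atom i : uniq A -> i \in A -> atom_poly (omega i) (a i).
Proof.
move=> uA iA; pose e j := nat_of_bool (j == i).
have eA : {in rem i A, forall j, e j = 0%N}.
  by move=> j jA; rewrite /e; case: eqP => // ji; move: jA; rewrite ji mem_rem_uniqF.
have ei : e i = 1%N by rewrite /e eqxx.
apply: eq_atom_poly (atom_poly_le _ (atom_poly_monomial e)) => [x|].
  by rewrite /atom_monomial (big_rem i) //= ei expr1 big_seq big1 ?mulr1 // => j /eA ->.
by rewrite /atom_weight (big_rem i) //= ei mul1n big_seq big1 ?addn0 // => j /eA ->.
Qed.

Lemma atom_polyD b F G : atom_poly b F -> atom_poly b G -> atom_poly b (F \+ G).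
Proof.
move=> [p [pb pF]] [q [qb qG]]; exists (p ++ q).
by split => [|x]; rewrite ?all_cat ?pb ?qb // big_cat /= pF qG.
Qed.

Lemma atom_polyM b1 b2 F G : atom_poly b1 F -> atom_poly b2 G -> atom_poly (b1 + b2) (F \* G).
Proof.
move=> [p [pb pF]] [q [qb qG]].
exists [seq (y.1 * z.1, fun i => (y.2 i + z.2 i)%N) | y <- p, z <- q]; split => [|x].
  apply/allP => _ /allpairsP[[y z] [/= yp zq ->]].
  rewrite /atom_weight /= (eq_bigr (fun i => y.2 i * omega i + z.2 i * omega i)%N).
    by rewrite big_split leq_add //; [exact: (allP pb) | exact: (allP qb)].
  by move=> i _; rewrite mulnDl.
rewrite /= pF qG big_allpairs_dep mulr_suml; apply: eq_bigr => y _.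
rewrite mulr_sumr; apply: eq_bigr => z _; rewrite /atom_monomial /=.
under [in RHS]eq_bigr do rewrite exprD.
by rewrite big_split mulrACA.
Qed.

Lemma atom_poly_sum (J : Type) (r : seq J) b (F : J -> X -> R) :
  (forall j, atom_poly b (F j)) -> atom_poly b (fun x => \sum_(j <- r) F j x).
Proof.
move=> FP; elim: r => [|j r IH].
  by apply: eq_atom_poly (atom_poly_le _ (atom_poly_cst 0)) => // x; rewrite big_nil.
by apply: eq_atom_poly (atom_polyD (FP j) IH) => x; rewrite big_cons.
Qed.

Lemma atom_poly_prod (J : eqType) (r : seq J) (b : J -> nat) (F : J -> X -> R) :
  (forall j, j \in r -> atom_poly (b j) (F j)) ->
  atom_poly (\sum_(j <- r) b j) (fun x => \prod_(j <- r) F j x).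
Proof.
elim: r => [_|j r IH FP].
  by rewrite big_nil; apply: eq_atom_poly (atom_poly_cst 1) => x; rewrite big_nil.
rewrite big_cons; apply: eq_atom_poly (atom_polyM (FP j (mem_head _ _)) _) => [x|].
  by rewrite big_cons.
by apply: IH => j' j'r; apply: FP; rewrite in_cons j'r orbT.
Qed.

Lemma atom_polyX b F n : atom_poly b F -> atom_poly (n * b) (fun x => F x ^+ n).
Proof.
move=> FP; elim: n => [|n IH].
  by apply: eq_atom_poly (atom_poly_cst 1) => x; rewrite expr0.
by rewrite mulSn; apply: eq_atom_poly (atom_polyM FP IH) => x; rewrite exprS.
Qed.

Lemma atom_poly_weight0 b F : (forall i, omega i = 0%N) -> atom_poly b F -> atom_poly 0 F.
Proof.
move=> omega0 [p [_ pF]]; exists p; split => //; apply/allP => y _.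
by rewrite /atom_weight big1 // => i _; rewrite omega0 muln0.
Qed.

End atom_polynomial.

Lemma atom_poly_subst (R : comPzRingType) (X Y : Type) (I J : eqType)
    (a : I -> X -> R) (A : seq I) (omega : I -> nat)
    (a' : J -> Y -> R) (A' : seq J) (omega' : J -> nat) (phi : Y -> X) b F :
  atom_poly a A omega b F ->
  (forall i, i \in A -> atom_poly a' A' omega' (omega i) (a i \o phi)) ->
  atom_poly a' A' omega' b (F \o phi).
Proof.
move=> [p [pb pF]] aP.
apply: eq_atom_poly (fun y => esym (pF (phi y))) _.
elim: p pb {pF} => [_|y p IH /andP[yb pb]].
  by apply: eq_atom_poly (atom_poly_le (leq0n b) (atom_poly_cst _ _ _ 0)) => x; rewrite big_nil.
apply: eq_atom_poly (atom_polyD _ (IH pb)) => [x|]; first by rewrite big_cons.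
apply: atom_poly_le yb _; rewrite -[atom_weight _ _ _]add0n.
apply: atom_polyM; first exact: atom_poly_cst.
by apply: atom_poly_prod => i iA; apply: atom_polyX; exact: aP.
Qed.

Section loop_indices.
Context {R : realType} {m : nat} (L : prob_solvable R m).

Definition rand_options (i : 'I_m) : seq (option (bool * nat)) :=
  None :: [seq Some (br, t) | br <- [:: true; false], t <- iota 0 (size (ps_terms L i br))].

(* Coefficients of nonexistent monomials are never used; leaving them out keeps the lists of
   random quantities finite. *)
Definition rand_locals : seq ('I_m * option (bool * nat)) :=
  undup [seq (i, o) | i <- enum 'I_m, o <- rand_options i].

Lemma rand_locals_uniq : uniq rand_locals.
Proof. exact: undup_uniq. Qed.

Lemma mem_rand_locals q : (q \in rand_locals) = (q.2 \in rand_options q.1).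
Proof.
rewrite mem_undup; apply/allpairsPdep/idP => [[i [op [_ opi ->]]]|qo] //.
by exists q.1, q.2; rewrite mem_enum; case: q qo.
Qed.

Lemma mem_rand_locals_sel i : (i, None) \in rand_locals.
Proof. by rewrite mem_rand_locals mem_head. Qed.

Lemma mem_rand_locals_coef i br t :
  ((i, Some (br, t)) \in rand_locals) = (t < size (ps_terms L i br))%N.
Proof.
rewrite mem_rand_locals in_cons -[Some (br, t) == None]/false orFb.
apply/allpairsPdep/idP.
  by move=> [br' [t' [_ tb [-> ->]]]]; move: tb; rewrite mem_iota.
by move=> tlt; exists br, t; rewrite mem_iota; case: br tlt => tlt; rewrite !inE.
Qed.

Definition rand_before (n : nat) : seq (rindex m) :=
  [seq (k, q.1, q.2) | k <- iota 0 n, q <- rand_locals].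

Lemma rand_before_uniq n : uniq (rand_before n).
Proof.
apply: allpairs_uniq; [exact: iota_uniq | exact: rand_locals_uniq |].
by move=> [k [i o]] [k' [i' o']] _ _ /= [-> -> ->].
Qed.

Lemma mem_rand_before n r :
  (r \in rand_before n) = (r.1.1 < n)%N && ((r.1.2, r.2) \in rand_locals).
Proof.
apply/allpairsP/andP => [[[k q] [/= + qL ->]]|[rn rL]].
  by rewrite mem_iota; case: q qL.
by exists (r.1.1, (r.1.2, r.2)); rewrite mem_iota; case: r rn rL => [[]].
Qed.

Lemma rand_beforeS n :
  rand_before n.+1 = rand_before n ++ [seq (n, q.1, q.2) | q <- rand_locals].
Proof. by rewrite /rand_before -addn1 iotaD allpairs_cat /= cats0. Qed.

Definition mono_deg (N : monomial m) : nat := (\sum_(j < m) N j)%N.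

Definition weight_base : nat :=
  (\sum_(i < m) \sum_(br : bool) \sum_(N <- ps_terms L i br) mono_deg N).+1.

Definition mono_weight (N : monomial m) : nat := (\sum_(j < m) N j * weight_base ^ j)%N.

Lemma mono_weight_term i br N : N \in ps_terms L i br -> (mono_weight N <= weight_base ^ i)%N.
Proof.
move=> Ni; have N0 := ps_triangular Ni.
have degN : (mono_deg N < weight_base)%N.
  rewrite /weight_base ltnS (bigD1 i) //= (bigD1 br) //= (big_rem N) //= -!addnA.
  exact: leq_addr.
case: (posnP i) => [i0|i_gt0].
  by rewrite /mono_weight big1 // => j _; rewrite N0 ?i0.
rewrite -(prednK i_gt0) expnS; apply: leq_trans (_ : mono_deg N * weight_base ^ i.-1 <= _)%N.
  rewrite /mono_deg big_distrl /=; apply: leq_sum => j _.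
  case: (ltnP j i) => ji; last by rewrite N0.
  by rewrite leq_mul2l leq_pexp2l ?orbT // -ltnS prednK.
by rewrite leq_mul2r ltnW ?orbT.
Qed.

Definition monomials_upto (b : nat) : seq (monomial m) :=
  [seq N <- [seq [ffun j => val (f j)] | f : {ffun 'I_m -> 'I_b.+1}] | (mono_weight N <= b)%N].

Lemma monomials_upto_uniq b : uniq (monomials_upto b).
Proof.
apply: filter_uniq; rewrite map_inj_uniq ?enum_uniq //.
by move=> f g /ffunP fg; apply/ffunP => j; apply: val_inj; have := fg j; rewrite !ffunE.
Qed.

Lemma mem_monomials_upto b N : (N \in monomials_upto b) = (mono_weight N <= b)%N.
Proof.
rewrite mem_filter; case: leqP => //= Nb; apply/mapP.
have Nj j : (N j < b.+1)%N.
  rewrite ltnS; apply: leq_trans Nb; apply: (@leq_trans (N j * weight_base ^ j)).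
    by rewrite leq_pmulr // expn_gt0.
  by rewrite /mono_weight (bigD1 j) //= leq_addr.
by exists [ffun j => inord (N j)]; [rewrite mem_enum | apply/ffunP => j; rewrite !ffunE inordK].
Qed.

End loop_indices.

(* A branch selector enters the loop body only through the test [Z == 1]. *)
Definition atom_of {R : pzRingType} (o : option (bool * nat)) (x : R) : R :=
  if o is None then (x == 1)%:R else x.

Lemma if_natrE {R : pzRingType} (b : bool) (x y : R) :
  (if b then x else y) = b%:R * x + (1 - b%:R) * y.
Proof. by case: b; rewrite /= ?mulr1n ?mulr0n ?subrr ?subr0 ?mul0r ?addr0 ?add0r mul1r. Qed.

Section loop_body.
Context {d} {T : measurableType d} {R : realType} {m : nat}.
Variables (L : prob_solvable R m) (Z : rindex m -> T -> R).

Definition rand_atom (r : rindex m) (w : T) : R := atom_of r.2 (Z r w).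

(* The atoms of one execution of the body at [x = (k, w, s)]: the random quantities of
   iteration k and the current state variables. *)
Definition body_atom (i : ('I_m * option (bool * nat)) + 'I_m) (x : nat * T * ('I_m -> R)) : R :=
  match i with inl q => rand_atom (x.1.1, q.1, q.2) x.1.2 | inr j => x.2 j end.

Definition body_atoms : seq (('I_m * option (bool * nat)) + 'I_m) :=
  [seq inl q | q <- rand_locals L] ++ [seq inr j | j <- index_enum 'I_m].

Definition body_weight (i : ('I_m * option (bool * nat)) + 'I_m) : nat :=
  if i is inr j then weight_base L ^ j else 0.

Local Notation body_poly := (atom_poly body_atom body_atoms body_weight).

Lemma body_atoms_uniq : uniq body_atoms.
Proof.
rewrite cat_uniq map_inj_uniq ?rand_locals_uniq; last by move=> ? ? [].
rewrite map_inj_uniq ?index_enum_uniq ?andbT; last by move=> ? ? [].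
by apply/hasPn => _ /mapP[j _ ->]; apply/negP => /mapP[].
Qed.

Lemma body_poly_rand q : q \in rand_locals L ->
  body_poly 0 (fun x => rand_atom (x.1.1, q.1, q.2) x.1.2).
Proof.
move=> qL; apply: (@atom_poly_atom _ _ _ body_atom _ _ (inl q)) body_atoms_uniq _.
by rewrite mem_cat map_f.
Qed.

Lemma body_poly_var (j : 'I_m) : body_poly (weight_base L ^ j) (fun x => x.2 j).
Proof.
apply: (@atom_poly_atom _ _ _ body_atom _ _ (inr j)) body_atoms_uniq _.
by rewrite mem_cat orbC map_f ?mem_index_enum.
Qed.

Lemma body_poly_mono N : body_poly (mono_weight L N) (fun x => mono_eval N x.2).
Proof. by apply: atom_poly_prod => j _; exact/atom_polyX/body_poly_var. Qed.

Lemma body_poly_subst_state b F (G : nat * T * ('I_m -> R) -> 'I_m -> R) :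
  body_poly b F -> (forall j : 'I_m, body_poly (weight_base L ^ j) (fun x => G x j)) ->
  body_poly b (fun x => F (x.1, G x)).
Proof.
move=> FP GP; apply: (atom_poly_subst (phi := fun x => (x.1, G x))) FP _.
move=> [q|j] /=; last by move=> _; exact: GP.
by rewrite mem_cat => /orP[/mapP[q' q'L [->]]|/mapP[]//]; exact: body_poly_rand.
Qed.

Lemma body_poly_branch (i : 'I_m) br :
  body_poly (weight_base L ^ i) (fun x => branch_poly L Z x.1.1 x.1.2 i br x.2).
Proof.
apply: atom_poly_sum => t; rewrite -[(weight_base L ^ i)%N]add0n; apply: atom_polyM.
  by apply: (@body_poly_rand (i, Some (br, val t))); rewrite mem_rand_locals_coef ltn_ord.
by apply: atom_poly_le (mono_weight_term (mem_nth _ _)) (body_poly_mono _).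
Qed.

Lemma body_poly_assign (i : 'I_m) :
  body_poly (weight_base L ^ i) (fun x => assign L Z x.1.1 x.1.2 x.2 i).
Proof.
have sel := body_poly_rand (mem_rand_locals_sel L i).
have unsel : body_poly 0 (fun x => 1 - rand_atom (x.1.1, i, None) x.1.2).
  apply: atom_polyD (atom_poly_cst _ _ _ 1) _.
  by apply: eq_atom_poly (atom_polyM (atom_poly_cst _ _ _ (-1)) sel) => x /=; rewrite mulN1r.
have branch br (c : R) : body_poly (weight_base L ^ i)
    (fun x => c * x.2 i + branch_poly L Z x.1.1 x.1.2 i br x.2).
  apply: atom_polyD (body_poly_branch i br); rewrite -[(weight_base L ^ i)%N]add0n.
  exact: atom_polyM (atom_poly_cst _ _ _ c) (body_poly_var i).
rewrite -[(weight_base L ^ i)%N]add0n.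
apply: eq_atom_poly (atom_polyD (atom_polyM sel (branch true (ps_a L i)))
                              (atom_polyM unsel (branch false (ps_b L i)))) => x.
by rewrite /assign if_natrE.
Qed.

Lemma body_poly_steps (l : seq 'I_m) (j : 'I_m) : body_poly (weight_base L ^ j)
  (fun x => foldl (fun s i => upd s i (assign L Z x.1.1 x.1.2 s i)) x.2 l j).
Proof.
elim/last_ind: l j => [|l i IH] j; first exact: body_poly_var.
have stepE x j' : foldl (fun s i => upd s i (assign L Z x.1.1 x.1.2 s i)) x.2 (rcons l i) j' =
    if j' == i then assign L Z x.1.1 x.1.2
                  (foldl (fun s i => upd s i (assign L Z x.1.1 x.1.2 s i)) x.2 l) i
    else foldl (fun s i => upd s i (assign L Z x.1.1 x.1.2 s i)) x.2 l j'.
  by rewrite foldl_rcons.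
have [->|ji] := eqVneq j i.
  by apply: eq_atom_poly (body_poly_subst_state (body_poly_assign i) IH) => x; rewrite stepE eqxx.
by apply: eq_atom_poly (IH j) => x; rewrite stepE (negbTE ji).
Qed.

Lemma body_poly_body N :
  body_poly (mono_weight L N) (fun x => mono_eval N (body L Z x.1.1 x.1.2 x.2)).
Proof. exact: body_poly_subst_state (body_poly_mono N) (body_poly_steps _). Qed.

Definition state_exp (e : ('I_m * option (bool * nat)) + 'I_m -> nat) : monomial m :=
  [ffun j => e (inr j)].

Lemma body_monomialE e x : atom_monomial body_atom body_atoms e x =
  (\prod_(q <- rand_locals L) rand_atom (x.1.1, q.1, q.2) x.1.2 ^+ e (inl q)) *
  mono_eval (state_exp e) x.2.
Proof.
rewrite /atom_monomial big_cat !big_map; congr (_ * _).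
by apply: eq_bigr => j _; rewrite ffunE.
Qed.

Lemma body_weightE e : atom_weight body_atoms body_weight e = mono_weight L (state_exp e).
Proof.
rewrite /atom_weight big_cat !big_map big1 ?add0n => [|q _]; last by rewrite muln0.
by apply: eq_bigr => j _; rewrite ffunE.
Qed.

End loop_body.

Section past_atoms.
Context {d} {T : measurableType d} {R : realType} {m : nat}.
Variables (L : prob_solvable R m) (Z : rindex m -> T -> R).

(* Polynomials in the random quantities drawn before iteration n. *)
Local Notation past_poly n := (atom_poly (rand_atom Z) (rand_before L n) (fun=> 0%N) 0).

Lemma past_poly_rand n r : r \in rand_before L n -> past_poly n (rand_atom Z r).
Proof. exact: atom_poly_atom (rand_before_uniq L n). Qed.

Lemma past_poly_succ n F : past_poly n F -> past_poly n.+1 F.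
Proof.
move=> FP; apply: (atom_poly_subst (phi := id)) FP _ => r.
rewrite mem_rand_before => /andP[rn rL].
have rn1 : r \in rand_before L n.+1 by rewrite mem_rand_before ltnW.
exact: (eq_atom_poly _ (past_poly_rand rn1)).
Qed.

Lemma past_poly_state n (j : 'I_m) : past_poly n (fun w => state L Z n w j).
Proof.
elim: n j => [|n IH] j; first exact: atom_poly_cst.
apply: (@atom_poly_weight0 _ _ _ _ _ _ (weight_base L ^ j)) => //.
apply: (atom_poly_subst (phi := fun w => (n, w, state L Z n w))) (body_poly_steps L Z _ j) _.
move=> [q|j'] /=; last by move=> _; exact: atom_poly_le (leq0n _) (past_poly_succ (IH j')).
rewrite mem_cat => /orP[/mapP[q' qL [->]]|/mapP[]//].
have qn : (n, q'.1, q'.2) \in rand_before L n.+1.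
  by rewrite mem_rand_before /= ltnSn; case: q' qL.
exact: (eq_atom_poly _ (past_poly_rand qn)).
Qed.

Lemma past_poly_mono_rv N n : past_poly n (mono_rv L Z N n).
Proof.
apply: atom_poly_weight0 (atom_poly_prod _) => // j _.
exact/atom_polyX/past_poly_state.
Qed.

End past_atoms.

Lemma measurable_atom_of (R : realType) o : measurable_fun setT (@atom_of R o).
Proof.
case: o => [?|]; first exact: measurable_id.
rewrite (_ : atom_of None = \1_[set 1]); first exact: measurable_indic.
apply/funext => x; rewrite /atom_of indicE.
by case: eqP => [->|x1]; [rewrite mem_set | rewrite memNset].
Qed.

Section expectations.
Context d (T : measurableType d) (R : realType) (m : nat).
Variables (L : prob_solvable R m) (P : probability T R) (Z : rindex m -> {RV P >-> R}).
Hypothesis HL : loop_model L P Z.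
Local Notation Zf := (fun r => Z r : T -> R).
Local Notation past_poly n := (atom_poly (rand_atom Zf) (rand_before L n) (fun=> 0%N) 0).

Let measurable_Z r : measurable_fun setT (Zf r).
Proof. exact: measurable_funP. Qed.

Let independent_Z : mutually_independent P Zf.
Proof. by case: HL. Qed.

Lemma integrable_rand_atomX r k : (r.1.2, r.2) \in rand_locals L ->
  P.-integrable setT (fun w => (rand_atom Zf r w ^+ k)%:E).
Proof.
case: r => [[n i] [[br t]|]] /= rL.
  by rewrite mem_rand_locals_coef in rL; case: HL => _ _ _ Zint _; exact: Zint.
apply: (@le_integrable _ _ _ P setT measurableT _ (EFin \o cst 1)); last first.
- exact: finite_measure_integrable_cst.
- move=> w _; rewrite /= lee_fin normr1 normrX /rand_atom /=.
  by apply: exprn_ile1 => //; case: eqP; rewrite ?normr1 ?normr0.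
- apply/measurable_EFinP.
  exact: measurableT_comp (measurable_funX _ (@measurable_atom_of R _)) (measurable_Z _).
Qed.

Lemma Rintegral_sel_atomX k i e :
  \int[P]_w rand_atom Zf (k, i, None) w ^+ e.+1 = ps_p L i.
Proof.
have mA : measurable (Zf (k, i, None) @^-1` [set 1]).
  by rewrite -[X in measurable X]setTI; apply: measurable_Z => //; exact: measurable_set1.
have selE w : rand_atom Zf (k, i, None) w ^+ e.+1 = \1_(Zf (k, i, None) @^-1` [set 1]) w.
  rewrite /rand_atom /= indicE.
  by case: eqP => Z1; [rewrite mem_set // expr1n | rewrite memNset // expr0n].
under eq_Rintegral do rewrite selE.
case: HL => _ Psel _ _ _.
by rewrite /Rintegral integral_indic // setIT /= Psel.
Qed.

Lemma Rintegral_rand_atomX_shift k q e : q \in rand_locals L ->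
  \int[P]_w rand_atom Zf (k, q.1, q.2) w ^+ e =
  \int[P]_w rand_atom Zf (0%N, q.1, q.2) w ^+ e.
Proof.
case: q => i [[br t]|] /= qL; last by case: e => [|e]; rewrite ?Rintegral_sel_atomX.
rewrite mem_rand_locals_coef in qL; case: HL => _ _ _ _ Zmom.
by have := Zmom k 0%N i br t e qL; rewrite !unlock /Rintegral => ->.
Qed.

Lemma integrable_past_monomial n e :
  P.-integrable setT (EFin \o atom_monomial (rand_atom Zf) (rand_before L n) e).
Proof.
apply: (@integrable_prod _ _ _ _ _ _ measurable_Z independent_Z _
  (fun r x => atom_of r.2 x ^+ e r) (rand_before_uniq L n)) => r.
  exact: measurable_funX (@measurable_atom_of R _).
by rewrite mem_rand_before => /andP[_]; exact: integrable_rand_atomX.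
Qed.

Lemma Rintegral_past_monomial n e :
  \int[P]_w atom_monomial (rand_atom Zf) (rand_before L n) e w =
  \prod_(r <- rand_before L n) \int[P]_w rand_atom Zf r w ^+ e r.
Proof.
apply: (@Rintegral_prod _ _ _ _ _ _ measurable_Z independent_Z _
  (fun r x => atom_of r.2 x ^+ e r) (rand_before_uniq L n)) => r.
  exact: measurable_funX (@measurable_atom_of R _).
by rewrite mem_rand_before => /andP[_]; exact: integrable_rand_atomX.
Qed.

Lemma past_poly_integrable n F : past_poly n F -> P.-integrable setT (EFin \o F).
Proof.
move=> [p [_ pF]].
have := (Rintegral_lincomb p (integrable_past_monomial n)).1.
by apply: eq_integrable => // w _; rewrite /= pF.
Qed.

Definition rand_moment (e : 'I_m * option (bool * nat) -> nat) : R :=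
  \prod_(q <- rand_locals L) \int[P]_w rand_atom Zf (0%N, q.1, q.2) w ^+ e q.

Lemma Rintegral_rand_past n (e : 'I_m * option (bool * nat) -> nat) F : past_poly n F ->
  P.-integrable setT
    (fun w => ((\prod_(q <- rand_locals L) rand_atom Zf (n, q.1, q.2) w ^+ e q) * F w)%:E) /\
  \int[P]_w ((\prod_(q <- rand_locals L) rand_atom Zf (n, q.1, q.2) w ^+ e q) * F w) =
  rand_moment e * \int[P]_w F w.
Proof.
move=> [p [_ pF]].
pose ext (E : rindex m -> nat) r := if r.1.1 == n then e (r.1.2, r.2) else E r.
have ext_monomialE (E : rindex m -> nat) (v : T) :
    (\prod_(q <- rand_locals L) rand_atom Zf (n, q.1, q.2) v ^+ e q) *
    atom_monomial (rand_atom Zf) (rand_before L n) E v =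
    atom_monomial (rand_atom Zf) (rand_before L n.+1) (ext E) v.
  rewrite /atom_monomial rand_beforeS big_cat big_map mulrC; congr (_ * _).
    apply: eq_big_seq => r; rewrite mem_rand_before => /andP[rn _].
    by rewrite /ext ifN // neq_ltn rn.
  by apply: eq_bigr => -[i o] _; rewrite /ext /= eqxx.
have [Fint FE] := Rintegral_lincomb p (integrable_past_monomial n).
have [extint extE'] := Rintegral_lincomb [seq (y.1, ext y.2) | y <- p]
  (integrable_past_monomial n.+1).
have prodE v : (\prod_(q <- rand_locals L) rand_atom Zf (n, q.1, q.2) v ^+ e q) * F v =
    \sum_(y <- [seq (y.1, ext y.2) | y <- p]) y.1 *
      atom_monomial (rand_atom Zf) (rand_before L n.+1) y.2 v.
  by rewrite pF mulr_sumr big_map; apply: eq_bigr => y _; rewrite mulrCA ext_monomialE.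
split; first by apply: eq_integrable extint => // w _; rewrite /= prodE.
under eq_Rintegral do rewrite prodE.
rewrite extE' (eq_Rintegral _ (fun w _ => pF w)) FE big_map mulr_sumr.
apply: eq_bigr => y _; rewrite !Rintegral_past_monomial rand_beforeS big_cat big_map /=.
have -> : \prod_(r <- rand_before L n) \int[P]_w rand_atom Zf r w ^+ ext y.2 r =
          \prod_(r <- rand_before L n) \int[P]_w rand_atom Zf r w ^+ y.2 r.
  apply: eq_big_seq => r; rewrite mem_rand_before => /andP[rn _].
  by rewrite /ext ifN // neq_ltn rn.
have -> : \prod_(q <- rand_locals L)
            \int[P]_w rand_atom Zf (n, q.1, q.2) w ^+ ext y.2 (n, q.1, q.2) = rand_moment e.
  apply: eq_big_seq => -[i o] qL; rewrite /ext /= eqxx.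
  exact: (@Rintegral_rand_atomX_shift n (i, o) _ qL).
by rewrite [RHS]mulrC mulrA.
Qed.

Lemma Rintegral_mono_rv_succ N p n :
  (forall x, mono_eval N (body L Zf x.1.1 x.1.2 x.2) =
     \sum_(y <- p) y.1 * atom_monomial (body_atom Zf) (body_atoms L) y.2 x) ->
  \int[P]_w mono_rv L Zf N n.+1 w =
  \sum_(y <- p) y.1 * rand_moment (fun q => y.2 (inl q)) *
                \int[P]_w mono_rv L Zf (state_exp y.2) n w.
Proof.
move=> pN.
pose phi (e : ('I_m * option (bool * nat)) + 'I_m -> nat) w :=
  (\prod_(q <- rand_locals L) rand_atom Zf (n, q.1, q.2) w ^+ e (inl q)) *
  mono_rv L Zf (state_exp e) n w.
have phiP e :=
  @Rintegral_rand_past n (fun q => e (inl q)) _ (past_poly_mono_rv L Zf (state_exp e) n).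
have [_ phiE] := Rintegral_lincomb p (fun e => (phiP e).1).
rewrite (eq_Rintegral _ (fun w _ => pN (n, w, state L Zf n w))).
under eq_Rintegral do under eq_bigr do rewrite body_monomialE.
by rewrite phiE; apply: eq_bigr => y _; rewrite (phiP _).2 mulrA.
Qed.

End expectations.

Theorem mainTheorem1 (d : measure_display) (T : measurableType d) (R : realType)
    (m : nat) (L : prob_solvable R m) (P : probability T R)
    (Z : rindex m -> {RV P >-> R}) (M : monomial m) :
  loop_model L P Z ->
  exists (S : seq (monomial m)) (c : monomial m -> monomial m -> R)
         (e : monomial m -> R),
    [/\ M \in S,
        (forall N n, N \in S ->
           P.-integrable setT (fun w => (mono_rv L (fun j => Z j : T -> R) N n w)%:E))
      & (forall N n, N \in S ->
           ('E_P[mono_rv L (fun j => Z j : T -> R) N n.+1] =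
            \sum_(N' <- S) (c N N')%:E * 'E_P[mono_rv L (fun j => Z j : T -> R) N' n]
              + (e N)%:E)%E)].
Proof.
move=> HL; set Zf := fun j => Z j : T -> R.
have mono_int N n := past_poly_integrable HL (past_poly_mono_rv L Zf N n).
pose rep N := projT1 (cid (body_poly_body L Zf N)).
have repP N := projT2 (cid (body_poly_body L Zf N)).
exists (monomials_upto L (mono_weight L M)).
exists (fun N N' => \sum_(y <- rep N | state_exp y.2 == N')
                      y.1 * rand_moment L Z (fun q => y.2 (inl q))).
exists (fun=> 0); split => [|N n _|N n]; first by rewrite mem_monomials_upto.
  exact: mono_int.
rewrite mem_monomials_upto => NM; rewrite !expectation_Rintegral //.
under eq_bigr do rewrite expectation_Rintegral // -EFinM.
rewrite sumEFin -EFinD addr0 (Rintegral_mono_rv_succ HL _ (repP N).2) partition_sumr_seq //.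
  exact: monomials_upto_uniq.
apply/allP => y /(allP (repP N).1); rewrite body_weightE mem_monomials_upto => yN.
exact: leq_trans yN NM.
Qed.
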